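(* Let $G$ be a metabelian group and $g\in G$. Then every right Engel sink of $g^{-1}$ is a left Engel sink of $g$. In particular, if $g^{-1}$ has a finite (minimal) right Engel sink $\mathscr R(g^{-1})$, then $g$ has a finite left Engel sink and $\mathscr E(g)\subseteq\mathscr R(g^{-1})$.
   Context: Commutators: $a^b=b^{-1}ab$, $[a,b]=a^{-1}b^{-1}ab$, and $[a,{}_nb]=[\dots[[a,b],b],\dots,b]$ with $b$ repeated $n$ times. A right Engel sink of $g\in G$ is a set $\mathscr R\subseteq G$ such that for every $x\in G$ there is a positive integer $r(x)$ with $[g,{}_nx]\in\mathscr R$ for all $n\ge r(x)$; a left Engel sink of $g$ is a set $\mathscr E\subseteq G$ such that for every $x\in G$ there is a positive integer $l(x)$ with $[x,{}_ng]\in\mathscr E$ for all $n\ge l(x)$. When finite sinks exist, the intersection of all finite right (resp. left) Engel sinks of $g$ is again one; these minimal sinks are denoted $\mathscr R(g)$ and $\mathscr E(g)$. A group is metabelian if its derived subgroup is abelian. *)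

(* groups here may be infinite, so we use an explicit
   group record instead of MathComp's finGroupType. *)
From Stdlib Require Import List Arith.

Record group := Group {
  carrier :> Type;
  gmul : carrier -> carrier -> carrier;
  ginv : carrier -> carrier;
  gone : carrier;
  gmulA : forall x y z, gmul x (gmul y z) = gmul (gmul x y) z;
  gmul1 : forall x, gmul gone x = x;
  gmulV : forall x, gmul (ginv x) x = gone
}.

Arguments gmul {g} _ _.
Arguments ginv {g} _.
Arguments gone {g}.

Definition comm {G : group} (a b : G) : G :=
  gmul (gmul (gmul (ginv a) (ginv b)) a) b.

Fixpoint comm_iter {G : group} (a b : G) (n : nat) : G :=
  match n with
  | 0 => a
  | S k => comm (comm_iter a b k) b
  end.

Inductive derived (G : group) : G -> Prop :=
  | derived_comm : forall a b : G, derived G (comm a b)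
  | derived_one : derived G gone
  | derived_mul : forall x y, derived G x -> derived G y -> derived G (gmul x y)
  | derived_inv : forall x, derived G x -> derived G (ginv x).

Definition metabelian (G : group) : Prop :=
  forall x y : G, derived G x -> derived G y -> gmul x y = gmul y x.

Definition right_engel_sink {G : group} (g : G) (R : G -> Prop) : Prop :=
  forall x : G, exists r, 0 < r /\ forall n, r <= n -> R (comm_iter g x n).

Definition left_engel_sink {G : group} (g : G) (E : G -> Prop) : Prop :=
  forall x : G, exists l, 0 < l /\ forall n, l <= n -> E (comm_iter x g n).

Definition finite_set {G : group} (S : G -> Prop) : Prop :=
  exists l : list G, forall x, S x -> In x l.

(* minimal sinks = intersections of all finite sinks *)
Definition min_right_sink {G : group} (g : G) (x : G) : Prop :=
  forall R, finite_set R -> right_engel_sink g R -> R x.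

Definition min_left_sink {G : group} (g : G) (x : G) : Prop :=
  forall E, finite_set E -> left_engel_sink g E -> E x.

(* Put c = [x,g] and y = c g.  A direct computation gives [g^-1, y] = [c, g] = [x,g,g],
   and for any b commuting with c one has [b, y] = [b, g].  In a metabelian group every
   [x,_k g] with k >= 1 lies in G' and so commutes with c; hence
   [g^-1, _n y] = [x, _(n+1) g] for n >= 1, and the tail of the left Engel sequence of
   g at x is a tail of the right Engel sequence of g^-1 at y. *)

From Stdlib Require Import List Arith Lia.

Section GroupFacts.
Variable G : group.
Implicit Types b c g x y z : G.

Lemma gmulV_r x : gmul x (ginv x) = gone.
Proof.
  rewrite <- (gmul1 G (gmul x (ginv x))), <- (gmulV G (ginv x)) at 1.
  rewrite <- gmulA, (gmulA G (ginv x) x (ginv x)), gmulV, gmul1.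
  apply gmulV.
Qed.

Lemma gmul1_r x : gmul x gone = x.
Proof. rewrite <- (gmulV G x), gmulA, gmulV_r. apply gmul1. Qed.

Lemma gmulKV x y : gmul (ginv x) (gmul x y) = y.
Proof. rewrite gmulA, gmulV. apply gmul1. Qed.

Lemma gmulVK x y : gmul x (gmul (ginv x) y) = y.
Proof. rewrite gmulA, gmulV_r. apply gmul1. Qed.

Lemma ginv_unique x y : gmul x y = gone -> ginv x = y.
Proof. intro Hxy. rewrite <- (gmul1_r (ginv x)), <- Hxy. apply gmulKV. Qed.

Lemma ginvM x y : ginv (gmul x y) = gmul (ginv y) (ginv x).
Proof.
  apply ginv_unique.
  rewrite <- gmulA, (gmulA G y (ginv y)), gmulV_r, gmul1. apply gmulV_r.
Qed.

Lemma ginvK x : ginv (ginv x) = x.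
Proof. apply ginv_unique, gmulV. Qed.

Lemma comm_invl_mulr c g : comm (ginv g) (gmul c g) = comm c g.
Proof. unfold comm. rewrite ginvK, ginvM, <- !gmulA, gmulVK. reflexivity. Qed.

Lemma comm_mulr_commuting b c g :
  gmul b c = gmul c b -> comm b (gmul c g) = comm b g.
Proof.
  intro Hbc. unfold comm.
  rewrite ginvM, <- !gmulA, (gmulA G b c g), Hbc, <- gmulA, gmulKV.
  reflexivity.
Qed.

End GroupFacts.

Lemma comm_iter_invl_shift (G : group) (HG : metabelian G) (g x : G) (n : nat) :
  comm_iter (ginv g) (gmul (comm x g) g) (S n) = comm_iter x g (S (S n)).
Proof.
  induction n as [|n IH]; simpl.
  - apply comm_invl_mulr.
  - simpl in IH. rewrite IH. apply comm_mulr_commuting, HG.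
    all: apply derived_comm.
Qed.

Lemma right_sink_inv_left_sink (G : group) (HG : metabelian G) (g : G) (R : G -> Prop) :
  right_engel_sink (ginv g) R -> left_engel_sink g R.
Proof.
  intros HR x.
  destruct (HR (gmul (comm x g) g)) as [r [Hr Htail]].
  exists (S r). split; [lia |]. intros m Hm.
  destruct m as [| [| m]]; [lia | lia |].
  rewrite <- comm_iter_invl_shift by exact HG.
  apply Htail. lia.
Qed.

Theorem lemma2p5 (G : group) (HG : metabelian G) (g : G) :
  (forall R : G -> Prop, right_engel_sink (ginv g) R -> left_engel_sink g R) /\
  ((exists R : G -> Prop, finite_set R /\ right_engel_sink (ginv g) R) ->
     (exists E : G -> Prop, finite_set E /\ left_engel_sink g E) /\
     (forall x : G, min_left_sink g x -> min_right_sink (ginv g) x)).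
Proof.
  split; [exact (right_sink_inv_left_sink G HG g) |].
  intros [R [HRfin HR]]. split.
  - exists R. split; [exact HRfin | exact (right_sink_inv_left_sink G HG g R HR)].
  - intros x Hx R' HR'fin HR'.
    apply Hx; [exact HR'fin | exact (right_sink_inv_left_sink G HG g R' HR')].
Qed.
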